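(* Let $\mathfrak X=(X,\xrightarrow{F},\le)$ be a functional WSTS and let $\mathfrak S=\widehat{\mathfrak X}$ be its completion. For every state $s_0\in X$, $Cover_{\mathfrak X}(s_0)=\eta_X^{-1}(Cover_{\mathfrak S}(\eta_X(s_0)))=\eta_X^{-1}(\downarrow Clover_{\mathfrak S}(\eta_X(s_0)))$.
   Context: A functional WSTS $(X,\xrightarrow{F},\le)$: $(X,\le)$ a well partial order, $F$ a finite set of partial monotonic maps (upward-closed domain, monotone on it), $x\to f(x)$ for $x\in\operatorname{dom}f$. $Post^*$: reachability; $Cover(x)=\downarrow Post^*(\downarrow x)$. Completion: an ideal is a nonempty downward-closed directed subset of $X$; $\widehat X=\mathrm{Idl}(X)$ ordered by inclusion (a continuous dcpo, directed lubs being unions); $\eta_X(x)=\downarrow x$. For $f\in F$, $\widehat f$ has domain $\{C\mid C\cap\operatorname{dom}f\neq\emptyset\}$ and $\widehat f(C)=\downarrow f\langle C\cap\operatorname{dom}f\rangle$. $\widehat{\mathfrak X}=(\widehat X,\xrightarrow{\{\widehat f\}},\subseteq)$. In a dcpo, $\operatorname{Lub}(E)=\{\bigvee D\mid D\subseteq E\text{ directed}\}$, and $Clover_{\mathfrak S}(s)=\operatorname{Max}\operatorname{Lub}(Cover_{\mathfrak S}(s))$ (set of maximal elements). *)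

(* sets are predicates X -> Prop, compared extensionally. *)
From Stdlib Require Import List Relations.
Import ListNotations.
Set Implicit Arguments.

Section FWSTS.
Variable X : Type.
Variable le : X -> X -> Prop.

Definition is_wpo : Prop :=
  (forall x, le x x) /\
  (forall x y z, le x y -> le y z -> le x z) /\
  (forall x y, le x y -> le y x -> x = y) /\
  (forall u : nat -> X, exists i j, i < j /\ le (u i) (u j)).

Record pmap := {
  pdom : X -> Prop;
  pfun : X -> X;
  pdom_up : forall x y, le x y -> pdom x -> pdom y;
  pfun_mono : forall x y, pdom x -> le x y -> le (pfun x) (pfun y)
}.
End FWSTS.

Record fwsts := {
  st : Type;
  sle : st -> st -> Prop;
  swpo : is_wpo sle;
  maps : list (pmap sle)
}.

Section Defs.
Variable W : fwsts.
Notation X := (st W).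
Notation le := (@sle W).

Definition subset (A B : X -> Prop) : Prop := forall x, A x -> B x.

Definition step (x y : X) : Prop :=
  exists f, In f (maps W) /\ pdom f x /\ y = pfun f x.

Definition CoverX (s x : X) : Prop :=
  exists y, le y s /\ exists z, clos_refl_trans X step y z /\ le x z.

Definition is_ideal (C : X -> Prop) : Prop :=
  (exists x, C x) /\
  (forall x y, le x y -> C y -> C x) /\
  (forall x y, C x -> C y -> exists z, C z /\ le x z /\ le y z).

Definition eta (x : X) : X -> Prop := fun y => le y x.

(** transitions of the completion: C -> hat f (C) when C meets dom f,
    hat f(C) = downarrow f<C /\ dom f> *)
Definition hstep (C C' : X -> Prop) : Prop :=
  exists f, In f (maps W) /\ (exists x, C x /\ pdom f x) /\
    forall y, C' y <-> exists x, C x /\ pdom f x /\ le y (pfun f x).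

(** Cover_S(I) = downarrow Post^*(downarrow I), downarrow taken in Idl(X) *)
Definition CoverS (I J : X -> Prop) : Prop :=
  is_ideal J /\
  exists K, is_ideal K /\ subset K I /\
    exists L, clos_refl_trans (X -> Prop) hstep K L /\ subset J L.

Definition directed (D : (X -> Prop) -> Prop) : Prop :=
  (exists J, D J) /\
  forall J1 J2, D J1 -> D J2 -> exists J3, D J3 /\ subset J1 J3 /\ subset J2 J3.

(** Lub(E) = { \/ D | D subset of E directed }; directed lubs are unions *)
Definition Lub (E : (X -> Prop) -> Prop) (C : X -> Prop) : Prop :=
  exists D, (forall J, D J -> E J) /\ directed D /\
    forall x, C x <-> exists J, D J /\ J x.

Definition Clover (I M : X -> Prop) : Prop :=
  Lub (CoverS I) M /\
  forall M', Lub (CoverS I) M' -> subset M M' -> subset M' M.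

Definition downClover (I J : X -> Prop) : Prop :=
  is_ideal J /\ exists M, Clover I M /\ subset J M.

End Defs.

(* Cover_X(s0) is mirrored in the completion: a run from below s0 lifts along
   eta to a run of the completion, and conversely every point of an ideal
   reached in the completion is below the end of a concrete run, since hat f
   only collects points below f-images.  For Clover, the lubs of directed
   families in Cover_S(eta s0) are exactly the ideals contained in the
   downward-closed set Cover_X(s0), and any ideal inside a downward-closed set
   of a wpo extends to a maximal one: downward-closed sets admit no infinite
   strictly decreasing chain, and a non-directed one splits into two smaller
   downward-closed sets, one of which contains each of its ideals. *)

From Stdlib Require Import List Relations Classical ClassicalEpsilon.

Set Implicit Arguments.

Lemma not_Acc_descending_chain (T : Type) (R : T -> T -> Prop) (t0 : T) :
  ~ Acc R t0 -> exists u : nat -> T, u 0 = t0 /\ forall n, R (u (S n)) (u n).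
Proof.
  intros not_acc0.
  assert (next : forall t : {t | ~ Acc R t}, exists t' : {t | ~ Acc R t},
            R (proj1_sig t') (proj1_sig t)).
  { intros [t not_acc]; simpl. apply NNPP; intros no_pred. apply not_acc.
    constructor; intros t' Rt't. apply NNPP; intros not_acc'.
    apply no_pred. exists (exist _ t' not_acc'). exact Rt't. }
  pose (succ t := proj1_sig (constructive_indefinite_description _ (next t))).
  pose (chain := fix chain n := match n with
                                | 0 => exist _ t0 not_acc0
                                | S n => succ (chain n)
                                end).
  exists (fun n => proj1_sig (chain n)); split; [reflexivity|].
  intros n; simpl; unfold succ.
  destruct constructive_indefinite_description; assumption.
Qed.

Section Completion.
Variable W : fwsts.
Notation X := (st W).
Notation le := (@sle W).

Lemma le_refl (x : X) : le x x.
Proof. destruct (swpo W) as [refl _]; apply refl. Qed.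

Lemma le_trans (x y z : X) : le x y -> le y z -> le x z.
Proof. destruct (swpo W) as [_ [trans _]]; apply trans. Qed.

Definition down_closed (D : X -> Prop) : Prop :=
  forall x y, le x y -> D y -> D x.

Definition maximal_ideal_in (D M : X -> Prop) : Prop :=
  is_ideal W M /\ subset W M D /\
  forall M', is_ideal W M' -> subset W M M' -> subset W M' D -> subset W M' M.

Lemma eta_ideal (x : X) : is_ideal W (eta W x).
Proof.
  unfold is_ideal, eta; split; [exists x; apply le_refl|split].
  - intros a b; apply le_trans.
  - intros a b ax bx; exists x; auto using le_refl.
Qed.

Lemma eta_sub_down_closed (D : X -> Prop) (x : X) :
  down_closed D -> D x -> subset W (eta W x) D.
Proof. intros dcD Dx y yx; exact (dcD y x yx Dx). Qed.

Lemma hstep_eta (f : pmap le) (y : X) :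
  In f (maps W) -> pdom f y -> hstep W (eta W y) (eta W (pfun f y)).
Proof.
  intros f_in dom_y; exists f; split; [exact f_in|split].
  - exists y; split; [apply le_refl|exact dom_y].
  - intros w; unfold eta; split.
    + intros w_le; exists y; auto using le_refl.
    + intros [v [vy [dom_v w_le]]].
      apply le_trans with (1 := w_le), pfun_mono; assumption.
Qed.

Lemma reach_eta (y z : X) :
  clos_refl_trans X (step W) y z ->
  clos_refl_trans (X -> Prop) (hstep W) (eta W y) (eta W z).
Proof.
  induction 1 as [y z [f [f_in [dom_y ->]]] | | ]; eauto using rt_step, rt_refl, rt_trans, hstep_eta.
Qed.

Lemma hreach_below_reach (K L : X -> Prop) :
  clos_refl_trans (X -> Prop) (hstep W) K L ->
  forall w, L w -> exists y, K y /\ exists z, clos_refl_trans X (step W) y z /\ le w z.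
Proof.
  intros KL; apply clos_rt_rtn1 in KL.
  induction KL as [| L L' [f [f_in [_ L'_def]]] _ IH]; intros w Lw.
  - exists w; split; [exact Lw|]. exists w; split; [apply rt_refl|apply le_refl].
  - apply L'_def in Lw; destruct Lw as [v [Lv [dom_v w_le]]].
    destruct (IH v Lv) as [y [Ky [z [yz vz]]]].
    exists y; split; [exact Ky|]. exists (pfun f z); split.
    + apply rt_trans with z; [exact yz|].
      apply rt_step; exists f; repeat split; [exact f_in|].
      apply pdom_up with v; assumption.
    + apply le_trans with (1 := w_le), pfun_mono; assumption.
Qed.

Lemma CoverX_down_closed (s0 : X) : down_closed (CoverX W s0).
Proof.
  intros u v uv [y [ys0 [z [yz vz]]]].
  exists y; split; [exact ys0|]. exists z; split; [exact yz|]. apply le_trans with v; assumption.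
Qed.

Lemma CoverX_CoverS (s0 x : X) : CoverX W s0 x -> CoverS W (eta W s0) (eta W x).
Proof.
  intros [y [ys0 [z [yz xz]]]]; split; [apply eta_ideal|].
  exists (eta W y); split; [apply eta_ideal|split].
  - intros w wy; apply le_trans with y; assumption.
  - exists (eta W z); split; [apply reach_eta; exact yz|].
    intros w wx; apply le_trans with x; assumption.
Qed.

Lemma CoverS_sub_CoverX (s0 : X) (J : X -> Prop) :
  CoverS W (eta W s0) J -> subset W J (CoverX W s0).
Proof.
  intros [_ [K [_ [Ks0 [L [KL JL]]]]]] w Jw.
  destruct (hreach_below_reach KL w (JL w Jw)) as [y [Ky [z [yz wz]]]].
  exists y; split; [exact (Ks0 y Ky)|]. exists z; auto.
Qed.

Lemma CoverX_iff_CoverS (s0 x : X) :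
  CoverX W s0 x <-> CoverS W (eta W s0) (eta W x).
Proof.
  split; [apply CoverX_CoverS|].
  intros cover; exact (CoverS_sub_CoverX cover x (le_refl x)).
Qed.

Lemma directed_union_ideal (D : (X -> Prop) -> Prop) (M : X -> Prop) :
  (forall J, D J -> is_ideal W J) -> directed W D ->
  (forall x, M x <-> exists J, D J /\ J x) -> is_ideal W M.
Proof.
  intros D_ideals [[J0 DJ0] D_dir] M_union; split; [|split].
  - destruct (D_ideals J0 DJ0) as [[x0 J0x0] _].
    exists x0; apply M_union; eauto.
  - intros u v uv Mv; apply M_union in Mv; destruct Mv as [J [DJ Jv]].
    apply M_union; exists J; split; [exact DJ|].
    destruct (D_ideals J DJ) as [_ [J_down _]]; eauto.
  - intros u v Mu Mv; apply M_union in Mu, Mv.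
    destruct Mu as [J1 [DJ1 J1u]], Mv as [J2 [DJ2 J2v]].
    destruct (D_dir J1 J2 DJ1 DJ2) as [J3 [DJ3 [J13 J23]]].
    destruct (D_ideals J3 DJ3) as [_ [_ J3_dir]].
    destruct (J3_dir u v (J13 u J1u) (J23 v J2v)) as [z [J3z uvz]].
    exists z; split; [apply M_union; eauto|exact uvz].
Qed.

(* For the converse, M is the directed union of the eta y with y in M. *)
Lemma Lub_CoverS_iff (s0 : X) (M : X -> Prop) :
  Lub W (CoverS W (eta W s0)) M <-> is_ideal W M /\ subset W M (CoverX W s0).
Proof.
  split.
  - intros [D [D_cover [D_dir M_union]]]; split.
    + apply directed_union_ideal with D; [|exact D_dir|exact M_union].
      intros J DJ; exact (proj1 (D_cover J DJ)).
    + intros w Mw; apply M_union in Mw; destruct Mw as [J [DJ Jw]].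
      exact (CoverS_sub_CoverX (D_cover J DJ) w Jw).
  - intros [[[m0 Mm0] [M_down M_dir]] M_cover].
    exists (fun J => exists y, M y /\ J = eta W y); split; [|split; [split|]].
    + intros J [y [My ->]]; apply CoverX_CoverS, M_cover, My.
    + exists (eta W m0); eauto.
    + intros J1 J2 [y1 [My1 ->]] [y2 [My2 ->]].
      destruct (M_dir y1 y2 My1 My2) as [z [Mz [y1z y2z]]].
      exists (eta W z); split; [eauto|].
      split; intros w; unfold eta; eauto using le_trans.
    + intros w; split.
      * intros Mw; exists (eta W w); split; [eauto|apply le_refl].
      * intros [J [[y [My ->]] wy]]; exact (M_down w y wy My).
Qed.

Lemma Clover_of_maximal (s0 : X) (M : X -> Prop) :
  maximal_ideal_in (CoverX W s0) M -> Clover W (eta W s0) M.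
Proof.
  intros [M_ideal [M_cover M_max]]; split.
  - apply Lub_CoverS_iff; split; assumption.
  - intros M' M'_lub MM'; apply Lub_CoverS_iff in M'_lub.
    destruct M'_lub as [M'_ideal M'_cover]; exact (M_max M' M'_ideal MM' M'_cover).
Qed.

Definition strict_down_sub (D' D : X -> Prop) : Prop :=
  down_closed D' /\ down_closed D /\ subset W D' D /\ exists y, D y /\ ~ D' y.

Lemma strict_down_sub_wf : well_founded strict_down_sub.
Proof.
  intros D0; apply NNPP; intros not_acc.
  destruct (not_Acc_descending_chain not_acc) as [Ds [_ Ds_desc]].
  assert (gap : forall n, exists a, Ds n a /\ ~ Ds (S n) a)
    by (intros n; exact (proj2 (proj2 (proj2 (Ds_desc n))))).
  apply choice in gap; destruct gap as [a a_gap].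
  assert (Ds_anti : forall i j, i <= j -> subset W (Ds j) (Ds i)).
  { induction 1 as [|j _ IH]; intros w Dw; [exact Dw|].
    apply IH, (proj1 (proj2 (proj2 (Ds_desc j)))), Dw. }
  destruct (swpo W) as [_ [_ [_ wqo]]].
  destruct (wqo a) as [i [j [ij aij]]].
  apply (proj2 (a_gap i)), (proj1 (Ds_desc i)) with (a j); [exact aij|].
  exact (Ds_anti (S i) j ij (a j) (proj1 (a_gap j))).
Qed.

Lemma directed_down_closed_maximal (D J : X -> Prop) :
  down_closed D -> is_ideal W J -> subset W J D ->
  (forall x y, D x -> D y -> exists z, D z /\ le x z /\ le y z) ->
  maximal_ideal_in D D.
Proof.
  intros D_down [[x Jx] _] JD D_dir.
  split; [split; [exists x; exact (JD x Jx)|split; assumption]|].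
  split; [intros w Dw; exact Dw|]. intros M' _ _ M'D; exact M'D.
Qed.

Lemma ideal_avoids_cone (D : X -> Prop) (a b : X) :
  (forall z, D z -> ~ (le a z /\ le b z)) ->
  forall M, is_ideal W M -> subset W M D ->
  subset W M (fun y => D y /\ ~ le a y) \/ subset W M (fun y => D y /\ ~ le b y).
Proof.
  intros no_ub M [_ [_ M_dir]] MD; apply NNPP; intros neither.
  apply not_or_and in neither; destruct neither as [not_a not_b].
  apply not_all_ex_not in not_a, not_b.
  destruct not_a as [p not_a], not_b as [q not_b].
  apply imply_to_and in not_a, not_b.
  destruct not_a as [Mp ap], not_b as [Mq bq].
  assert (a_le : le a p) by (apply NNPP; intros n; apply ap; split; auto).
  assert (b_le : le b q) by (apply NNPP; intros n; apply bq; split; auto).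
  destruct (M_dir p q Mp Mq) as [r [Mr [pr qr]]].
  apply (no_ub r (MD r Mr)); split; eapply le_trans; eauto.
Qed.

(* If every ideal of D lies in E1 or E2, maximal ideals of D are obtained by
   first maximising in E1 and then, if possible, in E2. *)
Lemma maximal_ideal_split (D E1 E2 J : X -> Prop) :
  (forall M, is_ideal W M -> subset W M D -> subset W M E1 \/ subset W M E2) ->
  subset W E1 D -> subset W E2 D ->
  (forall J, is_ideal W J -> subset W J E1 -> exists M, subset W J M /\ maximal_ideal_in E1 M) ->
  (forall J, is_ideal W J -> subset W J E2 -> exists M, subset W J M /\ maximal_ideal_in E2 M) ->
  is_ideal W J -> subset W J E1 ->
  exists M, subset W J M /\ maximal_ideal_in D M.
Proof.
  intros split_D E1D E2D ext1 ext2 J_ideal JE1.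
  destruct (ext1 J J_ideal JE1) as [M1 [JM1 [M1_ideal [M1E1 M1_max]]]].
  destruct (classic (subset W M1 E2)) as [M1E2|not_M1E2].
  - destruct (ext2 M1 M1_ideal M1E2) as [M2 [M12 [M2_ideal [M2E2 M2_max]]]].
    exists M2; split; [intros w Jw; auto|].
    split; [exact M2_ideal|split; [intros w M2w; auto|]].
    intros M' M'_ideal M2M' M'D.
    destruct (split_D M' M'_ideal M'D) as [M'E1|M'E2].
    + intros w M'w; apply M12, (M1_max M'); [exact M'_ideal| |exact M'E1|exact M'w].
      intros v M1v; exact (M2M' v (M12 v M1v)).
    + exact (M2_max M' M'_ideal M2M' M'E2).
  - exists M1; split; [exact JM1|].
    split; [exact M1_ideal|split; [intros w M1w; auto|]].
    intros M' M'_ideal M1M' M'D.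
    destruct (split_D M' M'_ideal M'D) as [M'E1|M'E2].
    + exact (M1_max M' M'_ideal M1M' M'E1).
    + exfalso; apply not_M1E2; intros w M1w; auto.
Qed.

Lemma cone_removed_strict_sub (D : X -> Prop) (a : X) :
  down_closed D -> D a -> strict_down_sub (fun y => D y /\ ~ le a y) D.
Proof.
  intros D_down Da; split; [|split; [exact D_down|split]].
  - intros u v uv [Dv av]; split; [exact (D_down u v uv Dv)|].
    intros au; apply av, le_trans with u; assumption.
  - intros w [Dw _]; exact Dw.
  - exists a; split; [exact Da|]. intros [_ aa]; apply aa, le_refl.
Qed.

Lemma ideal_extends_to_maximal (D J : X -> Prop) :
  down_closed D -> is_ideal W J -> subset W J D ->
  exists M, subset W J M /\ maximal_ideal_in D M.
Proof.
  revert J; induction (strict_down_sub_wf D) as [D _ IH]; intros J D_down J_ideal JD.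
  destruct (classic (forall x y, D x -> D y -> exists z, D z /\ le x z /\ le y z))
    as [D_dir|D_not_dir].
  - exists D; split; [exact JD|].
    exact (directed_down_closed_maximal D_down J_ideal JD D_dir).
  - assert (no_ub : exists a b, D a /\ D b /\ forall z, D z -> ~ (le a z /\ le b z)).
    { apply NNPP; intros n; apply D_not_dir; intros x y Dx Dy.
      apply NNPP; intros no_z; apply n; exists x, y; repeat split; auto.
      intros z Dz [xz yz]; apply no_z; exists z; auto. }
    destruct no_ub as [a [b [Da [Db no_ub]]]].
    pose proof (cone_removed_strict_sub a D_down Da) as sub_a.
    pose proof (cone_removed_strict_sub b D_down Db) as sub_b.
    assert (ext_a := fun J => IH _ sub_a J (proj1 sub_a)).
    assert (ext_b := fun J => IH _ sub_b J (proj1 sub_b)).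
    pose proof (ideal_avoids_cone a b no_ub) as split_D.
    pose proof (proj1 (proj2 (proj2 sub_a))) as Da_sub.
    pose proof (proj1 (proj2 (proj2 sub_b))) as Db_sub.
    destruct (split_D J J_ideal JD) as [Ja|Jb].
    + exact (maximal_ideal_split split_D Da_sub Db_sub ext_a ext_b J_ideal Ja).
    + refine (maximal_ideal_split _ Db_sub Da_sub ext_b ext_a J_ideal Jb).
      intros M M_ideal MD; destruct (split_D M M_ideal MD); auto.
Qed.

End Completion.

Theorem proposition3p9 (W : fwsts) (s0 : st W) :
  forall x : st W,
    (CoverX W s0 x <-> CoverS W (eta W s0) (eta W x)) /\
    (CoverX W s0 x <-> downClover W (eta W s0) (eta W x)).
Proof.
  intros x; split; [apply CoverX_iff_CoverS|split].
  - intros cover_x.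
    assert (cover_down := @CoverX_down_closed W s0).
    destruct (ideal_extends_to_maximal cover_down (eta_ideal W x)
                (eta_sub_down_closed x cover_down cover_x)) as [M [xM M_max]].
    split; [apply eta_ideal|].
    exists M; split; [apply Clover_of_maximal; exact M_max|exact xM].
  - intros [_ [M [[M_lub _] xM]]].
    apply Lub_CoverS_iff in M_lub.
    exact (proj2 M_lub x (xM x (le_refl W x))).
Qed.
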